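(* Let $f:\mathbb{R}^n\to\mathbb{R}$ be bounded below by $f_{\mathrm{low}}$ and continuously differentiable with $\nabla f$ Lipschitz continuous with constant $L_{\nabla f}$. Run the algorithm described in the context, and suppose that (i) at every iteration $k$ the model $m_k$ is fully linear in $B(x_k,\Delta_k)$ with constants $\kappa_{\mathrm{mf}},\kappa_{\mathrm{mg}}>0$ independent of $k$, and $\|H_k\|\le \kappa_H-1$ for some $\kappa_H\ge 1$ independent of $k$; (ii) at every iteration the step satisfies $\|s_k\|\le\Delta_k$ and $m_k(x_k)-m_k(x_k+s_k)\ge \kappa_s\|g_k\|\min\left(\Delta_k,\frac{\|g_k\|}{\|H_k\|+1}\right)$ for some $\kappa_s\in(0,\tfrac12)$. Let $\epsilon>0$. If $\|\nabla f(x_k)\|\ge\epsilon$ for all $k=0,\ldots,K-1$, then $$K\le \frac{\log(\Delta_0/\Delta_{\min}(\epsilon))}{\log(\gamma_{\mathrm{dec}}^{-1})}+\left(1+\frac{\log(\gamma_{\mathrm{inc}})}{\log(\gamma_{\mathrm{dec}}^{-1})}\right)\frac{(1+\kappa_{\mathrm{mg}}\mu_c^{-1})[f(x_0)-f_{\mathrm{low}}]}{\eta_U\kappa_s\epsilon\Delta_{\min}(\epsilon)},$$ where $$\Delta_{\min}(\epsilon):=\min\left(\Delta_0,\ \frac{\gamma_{\mathrm{dec}}\epsilon}{\max\left(\frac{2\kappa_{\mathrm{mf}}}{\kappa_s(1-\eta_S)},\kappa_H,\mu_c\right)+\kappa_{\mathrm{mg}}},\ \frac{\epsilon}{(1+\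kappa_{\mathrm{mg}}\mu_c^{-1})\kappa_H}\right).$$
   Context: Norms are Euclidean (operator 2-norm for matrices); $B(x,\Delta)=\{y:\|y-x\|\le\Delta\}$. A model $m:\mathbb{R}^n\to\mathbb{R}$ is fully linear in $B(x,\Delta)$ with constants $\kappa_{\mathrm{mf}},\kappa_{\mathrm{mg}}>0$ if $|m(y)-f(y)|\le\kappa_{\mathrm{mf}}\Delta^2$ and $\|\nabla m(y)-\nabla f(y)\|\le\kappa_{\mathrm{mg}}\Delta$ for all $y\in B(x,\Delta)$. Algorithm: inputs $x_0\in\mathbb{R}^n$, $\Delta_0>0$, parameters $0<\gamma_{\mathrm{dec}}<1<\gamma_{\mathrm{inc}}$, $0<\eta_U\le\eta_S<1$, $\mu_c>0$. For $k=0,1,2,\ldots$: build a quadratic model $m_k(y)=c_k+g_k^T(y-x_k)+\tfrac12(y-x_k)^TH_k(y-x_k)$ ($H_k$ symmetric); compute a step $s_k$ (approximately minimizing $m_k(x_k+s)$ over $\|s\|\le\Delta_k$); evaluate $f(x_k+s_k)$ and $\rho_k=\frac{f(x_k)-f(x_k+s_k)}{m_k(x_k)-m_k(x_k+s_k)}$. If $\rho_k\ge\eta_S$ and $\|g_k\|\ge\mu_c\Delta_k$ (very successful): $x_{k+1}=x_k+s_k$, $\Delta_{k+1}=\gamma_{\mathrm{inc}}\Delta_k$. Else if $\eta_U\le\rho_k<\eta_S$ and $\|g_k\|\ge\mu_c\Delta_k$ (successful): $x_{k+1}=x_k+s_k$, $\Delta_{k+1}=\Delta_k$. Otherwise (unsuccessful):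 $x_{k+1}=x_k$, $\Delta_{k+1}=\gamma_{\mathrm{dec}}\Delta_k$. *)

From HB Require Import structures.
From mathcomp Require Import all_boot all_order all_algebra.
From mathcomp Require Import all_classical all_reals all_analysis.
Set Implicit Arguments. Unset Strict Implicit. Unset Printing Implicit Defensive.
Import Order.TTheory GRing.Theory Num.Theory.
Local Open Scope ring_scope.
Local Open Scope classical_set_scope.

Section TR.
Variables (R : realType) (n : nat).
Notation vec := 'cV[R]_n.

Definition dotv (u v : vec) : R := (u^T *m v) 0 0.
Definition enorm (v : vec) : R := Num.sqrt (dotv v v).

Definition opnorm (A : 'M[R]_n) : R :=
  sup [set enorm (A *m v) | v in [set v : vec | enorm v <= 1]].

Definition is_gradient (f : vec -> R) (x g : vec) : Prop :=
  forall e : R, 0 < e -> exists2 d : R, 0 < d &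
    forall y : vec, enorm (y - x) < d ->
      `|f y - f x - dotv g (y - x)| <= e * enorm (y - x).

Definition qmodel (c : R) (g : vec) (H : 'M[R]_n) (x y : vec) : R :=
  c + dotv g (y - x) + 2^-1 * dotv (y - x) (H *m (y - x)).

(* its gradient at y (H symmetric) *)
Definition qmodel_grad (g : vec) (H : 'M[R]_n) (x y : vec) : vec :=
  g + H *m (y - x).

Definition fully_linear (f : vec -> R) (gradf : vec -> vec) (kmf kmg : R)
  (c : R) (g : vec) (H : 'M[R]_n) (x : vec) (D : R) : Prop :=
  forall y : vec, enorm (y - x) <= D ->
    `|qmodel c g H x y - f y| <= kmf * D ^+ 2 /\
    enorm (qmodel_grad g H x y - gradf y) <= kmg * D.

Definition tr_rho (f : vec -> R) (c : R) (g : vec) (H : 'M[R]_n) (x s : vec) : R :=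
  (f x - f (x + s)) / (qmodel c g H x x - qmodel c g H x (x + s)).

Definition tr_update (f : vec -> R) (gdec ginc etaU etaS muc : R)
  (c : R) (g : vec) (H : 'M[R]_n) (x s : vec) (D : R) (x' : vec) (D' : R) : Prop :=
  let rho := tr_rho f c g H x s in
  (etaS <= rho /\ muc * D <= enorm g -> x' = x + s /\ D' = ginc * D) /\
  (etaU <= rho < etaS /\ muc * D <= enorm g -> x' = x + s /\ D' = D) /\
  (~ (etaU <= rho /\ muc * D <= enorm g) -> x' = x /\ D' = gdec * D).

Definition Delta_min (D0 gdec kmf kmg kH ks etaS muc eps : R) : R :=
  Num.min D0
   (Num.min (gdec * eps /
               (Num.max (2 * kmf / (ks * (1 - etaS))) (Num.max kH muc) + kmg))
            (eps / ((1 + kmg / muc) * kH))).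

End TR.

From HB Require Import structures.
From mathcomp Require Import all_boot all_order all_algebra.
From mathcomp Require Import all_classical all_reals all_analysis.
From mathcomp Require Import ring lra.
Set Implicit Arguments. Unset Strict Implicit. Unset Printing Implicit Defensive.
Import Order.TTheory GRing.Theory Num.Theory.
Local Open Scope ring_scope.

(** While the gradient stays above [eps], full linearity makes every iteration
    whose radius satisfies [Delta_k (M + kmg) <= eps] very successful, where
    [M = max (2 kmf / (ks (1 - etaS)), kH, muc)]; hence the radius never drops
    below [Delta_min eps].  Each successful iteration then decreases [f] by at
    least [etaU ks eps Delta_min / (1 + kmg / muc)], which bounds their number
    [S] by the budget [f x_0 - flow].  Finally
    [Delta_min <= Delta_K <= Delta_0 ginc^S gdec^U] bounds the number [U] of
    unsuccessful iterations, after taking logarithms. *)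

Section EuclideanNorm.
Variables (R : realType) (n : nat).
Implicit Types u v : 'cV[R]_n.

Lemma dotvE u v : dotv u v = \sum_i u i 0 * v i 0.
Proof. by rewrite /dotv mxE; apply: eq_bigr => i _; rewrite mxE. Qed.

Lemma dotvv_ge0 u : 0 <= dotv u u.
Proof. by rewrite dotvE; apply: sumr_ge0 => i _; rewrite -expr2 sqr_ge0. Qed.

Lemma enorm_ge0 u : 0 <= enorm u.
Proof. exact: sqrtr_ge0. Qed.

Lemma enorm0 : enorm (0 : 'cV[R]_n) = 0.
Proof. by rewrite /enorm dotvE big1 ?sqrtr0 // => i _; rewrite mxE mul0r. Qed.

Lemma enormN u : enorm (- u) = enorm u.
Proof.
by rewrite /enorm !dotvE; congr Num.sqrt; apply: eq_bigr => i _; rewrite !mxE mulrNN.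
Qed.

Lemma dotv_CauchySchwarz u v : dotv u v ^+ 2 <= dotv u u * dotv v v.
Proof.
rewrite !dotvE; set A := \sum_i u i 0 * u i 0; set B := \sum_i u i 0 * v i 0.
set C := \sum_i v i 0 * v i 0.
have lagrange : A * (A * C - B ^+ 2) = \sum_i (B * u i 0 - A * v i 0) ^+ 2.
  transitivity (\sum_i (B ^+ 2 * (u i 0 * u i 0) - (2 * A * B) * (u i 0 * v i 0)
                        + A ^+ 2 * (v i 0 * v i 0))).
    by rewrite big_split /= sumrB -!mulr_sumr -/A -/B -/C; ring.
  by apply: eq_bigr => i _; ring.
have [A_gt0|] := ltP 0 A.
  rewrite -subr_ge0 -(pmulr_rge0 _ A_gt0) lagrange.
  by apply: sumr_ge0 => i _; rewrite sqr_ge0.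
have A_ge0 : 0 <= A by apply: sumr_ge0 => i _; rewrite -expr2 sqr_ge0.
move=> A_le0; have A0 : A = 0 by apply/eqP; rewrite eq_le A_le0 A_ge0.
have u0 i : u i 0 = 0.
  apply/eqP; rewrite -[_ == 0]orbb -mulf_eq0; apply/eqP.
  by apply: (psumr_eq0P _ A0) => // j _; rewrite -expr2 sqr_ge0.
have -> : B = 0 by rewrite /B big1 // => i _; rewrite u0 mul0r.
by rewrite A0 mul0r expr0n.
Qed.

Lemma ler_enormD u v : enorm (u + v) <= enorm u + enorm v.
Proof.
have dotvDD : dotv (u + v) (u + v) = dotv u u + 2 * dotv u v + dotv v v.
  rewrite !dotvE mulr_sumr -!big_split /=; apply: eq_bigr => i _; rewrite !mxE; ring.
have dotv_le : dotv u v <= enorm u * enorm v.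
  rewrite /enorm -sqrtrM ?dotvv_ge0 // (le_trans (ler_norm _)) //.
  by rewrite -sqrtr_sqr ler_sqrt ?dotv_CauchySchwarz // mulr_ge0 ?dotvv_ge0.
rewrite -[enorm u + enorm v]ger0_norm ?addr_ge0 ?enorm_ge0 // -sqrtr_sqr.
rewrite /enorm ler_sqrt ?sqr_ge0 // dotvDD sqrrD !sqr_sqrtr ?dotvv_ge0 //.
rewrite -/(enorm u) -/(enorm v); lra.
Qed.

Lemma opnorm_ge0 (A : 'M[R]_n) : 0 <= opnorm A.
Proof.
rewrite /opnorm; set E := (X in sup X).
have [has_supE|] := pselect (has_sup E); last by move/sup_out->.
apply: le_trans (sup_upper_bound has_supE _); first exact: enorm_ge0 (A *m 0).
by exists 0; rewrite // /= enorm0 ler01.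
Qed.

End EuclideanNorm.

Section UpdateRule.
Variables (R : realType) (n : nat) (f : 'cV[R]_n -> R).
Variables (gdec ginc etaU etaS muc c D D' : R) (g x s x' : 'cV[R]_n) (H : 'M[R]_n).
Hypothesis upd : tr_update f gdec ginc etaU etaS muc c g H x s D x' D'.
Local Notation rho := (tr_rho f c g H x s).

Lemma tr_update_very_successful :
  etaS <= rho -> muc * D <= enorm g -> D' = ginc * D.
Proof. by case: upd => very_successful _ rhoS mucD; case: very_successful. Qed.

Lemma tr_update_successful : etaU <= rho -> muc * D <= enorm g ->
  x' = x + s /\ (D' = ginc * D \/ D' = D).
Proof.
case: upd => very_successful [successful _] rhoU mucD.
have [rhoS|rhoS] := leP etaS rho.
  by have [-> ->] := very_successful (conj rhoS mucD); split; [|left].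
have [-> ->] : x' = x + s /\ D' = D by apply: successful; rewrite rhoU rhoS.
by split; [|right].
Qed.

Lemma tr_update_unsuccessful :
  ~ (etaU <= rho /\ muc * D <= enorm g) -> x' = x /\ D' = gdec * D.
Proof. by case: upd => _ [_]; apply. Qed.

Lemma tr_update_radius_bounds : 0 < gdec -> gdec <= 1 -> 1 <= ginc -> 0 <= D ->
  gdec * D <= D' <= ginc * D.
Proof.
move=> gdec_gt0 gdec_le1 ginc_ge1 D_ge0.
have [[rhoU mucD]|failure] := pselect (etaU <= rho /\ muc * D <= enorm g).
  by have [_ [->|->]] := tr_update_successful rhoU mucD; apply/andP; split; nra.
by have [_ ->] := tr_update_unsuccessful failure; rewrite lexx; nra.
Qed.

End UpdateRule.

Section OneIteration.
Variables (R : realType) (n : nat) (f : 'cV[R]_n -> R) (gradf : 'cV[R]_n -> 'cV[R]_n).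
Variables (kmf kmg ks kH c D : R) (g x s : 'cV[R]_n) (H : 'M[R]_n).
Hypotheses (fl : fully_linear f gradf kmf kmg c g H x D)
  (D_ge0 : 0 <= D) (s_le : enorm s <= D).

Local Notation m := (qmodel c g H x).
Local Notation model_decrease := (m x - m (x + s)).
Local Notation rho := (tr_rho f c g H x s).

Lemma fully_linear_center :
  `|m x - f x| <= kmf * D ^+ 2 /\ enorm (g - gradf x) <= kmg * D.
Proof.
have [|m_err g_err] := fl (y := x); first by rewrite subrr enorm0.
by split=> //; move: g_err; rewrite /qmodel_grad subrr mulmx0 addr0.
Qed.

Lemma fully_linear_step : `|m (x + s) - f (x + s)| <= kmf * D ^+ 2.
Proof. by have [|] := fl (y := x + s); first by rewrite addrC addKr. Qed.

Lemma enorm_gradf_le : enorm (gradf x) <= enorm g + kmg * D.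
Proof.
have -> : gradf x = g + - (g - gradf x) by rewrite opprB addrC subrK.
by rewrite (le_trans (ler_enormD _ _)) // enormN lerD2l fully_linear_center.2.
Qed.

Lemma le_tr_rho (eta : R) :
  0 < model_decrease -> 2 * kmf * D ^+ 2 <= (1 - eta) * model_decrease -> eta <= rho.
Proof.
move=> model_decrease_gt0 accurate; rewrite /tr_rho ler_pdivlMr //.
have [/ler_normlP[? ?] _] := fully_linear_center.
have /ler_normlP[? ?] := fully_linear_step.
lra.
Qed.

Lemma decrease_ge_of_tr_rho (eta : R) :
  0 < model_decrease -> eta <= rho -> eta * model_decrease <= f x - f (x + s).
Proof. by move=> model_decrease_gt0; rewrite /tr_rho ler_pdivlMr. Qed.

Hypotheses (ks_gt0 : 0 < ks) (H_le : opnorm H + 1 <= kH)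
  (cauchy : ks * enorm g * Num.min D (enorm g / (opnorm H + 1)) <= model_decrease).

Let opnorm_H1_gt0 : 0 < opnorm H + 1.
Proof. exact: ltr_wpDl (opnorm_ge0 H) ltr01. Qed.

Let kH_gt0 : 0 < kH.
Proof. exact: lt_le_trans opnorm_H1_gt0 H_le. Qed.

Lemma model_decrease_ge (r : R) :
  0 <= r -> r <= D -> r * kH <= enorm g -> ks * enorm g * r <= model_decrease.
Proof.
move=> r_ge0 r_le_D rkH_le; apply: le_trans cauchy.
apply: ler_wpM2l; first by rewrite mulr_ge0 ?enorm_ge0 ?ltW.
rewrite le_min r_le_D ler_pdivlMr //.
by apply: le_trans _ rkH_le; exact: ler_wpM2l.
Qed.

Lemma very_successful_of_small_radius (etaS muc : R) :
  0 < kmf -> etaS < 1 -> 0 < D ->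
  Num.max (2 * kmf / (ks * (1 - etaS))) (Num.max kH muc) * D <= enorm g ->
  etaS <= rho /\ muc * D <= enorm g.
Proof.
set a := 2 * kmf / (ks * (1 - etaS)); set M := Num.max a _.
move=> kmf_gt0 etaS_lt1 D_gt0 MD_le.
have le_M_le m : m <= M -> m * D <= enorm g.
  by move=> m_le; apply: le_trans MD_le; rewrite ler_pM2r.
have aD_le : a * D <= enorm g by apply: le_M_le; rewrite /M le_max lexx.
have kHD_le : kH * D <= enorm g by apply: le_M_le; rewrite /M !le_max lexx !orbT.
have mucD_le : muc * D <= enorm g by apply: le_M_le; rewrite /M !le_max lexx !orbT.
have model_decrease_ge_D : ks * enorm g * D <= model_decrease.
  by apply: model_decrease_ge (ltW D_gt0) (lexx D) _; rewrite mulrC.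
split=> //; apply: le_tr_rho.
  apply: lt_le_trans model_decrease_ge_D; rewrite !mulr_gt0 //.
  by apply: lt_le_trans kHD_le; rewrite mulr_gt0.
have -> : 2 * kmf * D ^+ 2 = (1 - etaS) * (ks * (a * D) * D).
  by rewrite /a; field; rewrite !lt0r_neq0 // subr_gt0.
apply: ler_wpM2l; first by rewrite subr_ge0 ltW.
by apply: le_trans model_decrease_ge_D; rewrite ler_pM2r // ler_pM2l.
Qed.

Lemma decrease_of_successful_step (etaU muc eps r : R) :
  0 <= etaU -> 0 < muc -> 0 <= kmg -> 0 < r -> r <= D ->
  r * ((1 + kmg / muc) * kH) <= eps -> eps <= enorm (gradf x) ->
  etaU <= rho -> muc * D <= enorm g ->
  etaU * ks * eps * r / (1 + kmg / muc) <= f x - f (x + s).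
Proof.
set P := 1 + kmg / muc => etaU_ge0 muc_gt0 kmg_ge0 r_gt0 r_le_D r_le eps_le rhoU mucD.
have P_gt0 : 0 < P by rewrite /P ltr_pwDl ?ltr01 ?divr_ge0 ?(ltW muc_gt0).
have g_gt0 : 0 < enorm g.
  by apply: lt_le_trans mucD; rewrite mulr_gt0 // (lt_le_trans r_gt0).
have eps_le_gP : eps <= enorm g * P.
  apply: le_trans eps_le _; apply: le_trans enorm_gradf_le _.
  rewrite /P mulrDr mulr1 lerD2l mulrCA ler_wpM2l //.
  by rewrite ler_pdivlMr // mulrC.
have model_decrease_ge_r : ks * enorm g * r <= model_decrease.
  apply: model_decrease_ge => //; first exact: ltW.
  rewrite -(ler_pM2r P_gt0) (le_trans _ eps_le_gP) //.
  by rewrite -mulrA [kH * P]mulrC.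
have model_decrease_gt0 : 0 < model_decrease.
  by apply: lt_le_trans model_decrease_ge_r; rewrite !mulr_gt0.
apply: le_trans (decrease_ge_of_tr_rho model_decrease_gt0 rhoU).
rewrite -!mulrA; apply: ler_wpM2l => //; apply: le_trans model_decrease_ge_r.
rewrite -mulrA; apply: ler_wpM2l; first exact: ltW.
by rewrite mulrA mulrAC ler_pM2r // ler_pdivrMr.
Qed.

End OneIteration.

Section Iterates.
Variables (R : realType) (n : nat) (f : 'cV[R]_n -> R) (gradf : 'cV[R]_n -> 'cV[R]_n).
Variables (gdec ginc etaU etaS muc kmf kmg kH ks eps : R) (K : nat).
Variables (x : nat -> 'cV[R]_n) (Delta c : nat -> R) (g : nat -> 'cV[R]_n)
  (H : nat -> 'M[R]_n) (s : nat -> 'cV[R]_n).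
Hypotheses (gdec_gt0 : 0 < gdec) (gdec_lt1 : gdec < 1) (ginc_gt1 : 1 < ginc)
  (etaU_gt0 : 0 < etaU) (etaS_lt1 : etaS < 1) (muc_gt0 : 0 < muc)
  (kmf_gt0 : 0 < kmf) (kmg_gt0 : 0 < kmg) (kH_ge1 : 1 <= kH) (ks_gt0 : 0 < ks)
  (eps_gt0 : 0 < eps) (Delta0_gt0 : 0 < Delta 0%N).
Hypotheses
  (fl : forall k, fully_linear f gradf kmf kmg (c k) (g k) (H k) (x k) (Delta k))
  (H_le : forall k, opnorm (H k) <= kH - 1)
  (s_le : forall k, enorm (s k) <= Delta k)
  (cauchy : forall k, ks * enorm (g k) *
      Num.min (Delta k) (enorm (g k) / (opnorm (H k) + 1))
    <= qmodel (c k) (g k) (H k) (x k) (x k) - qmodel (c k) (g k) (H k) (x k) (x k + s k))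
  (upd : forall k, tr_update f gdec ginc etaU etaS muc (c k) (g k) (H k) (x k) (s k)
      (Delta k) (x k.+1) (Delta k.+1))
  (grad_ge : forall k, (k < K)%N -> eps <= enorm (gradf (x k))).

Arguments fl : clear implicits.
Local Notation rho k := (tr_rho f (c k) (g k) (H k) (x k) (s k)).
Local Notation M := (Num.max (2 * kmf / (ks * (1 - etaS))) (Num.max kH muc)).
Local Notation Dmin := (Delta_min (Delta 0%N) gdec kmf kmg kH ks etaS muc eps).
Local Notation decrease := (etaU * ks * eps * Dmin / (1 + kmg / muc)).

Let opnorm_H_le k : opnorm (H k) + 1 <= kH.
Proof. by rewrite -lerBrDr. Qed.

Let radius_bounds k : 0 <= Delta k -> gdec * Delta k <= Delta k.+1 <= ginc * Delta k.
Proof. by apply: tr_update_radius_bounds (upd k) _ _ _; rewrite ?ltW. Qed.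

Lemma Delta_gt0 k : 0 < Delta k.
Proof.
elim: k => // k Delta_gt0; apply: lt_le_trans (mulr_gt0 gdec_gt0 Delta_gt0) _.
by have /andP[] := radius_bounds (ltW Delta_gt0).
Qed.

Lemma very_successful_of_small_Delta k : (k < K)%N -> Delta k * (M + kmg) <= eps ->
  etaS <= rho k /\ muc * Delta k <= enorm (g k).
Proof.
move=> kK small; have D_gt0 := Delta_gt0 k.
apply: (very_successful_of_small_radius (fl k) (ltW D_gt0) (s_le k) ks_gt0 (opnorm_H_le k)
  (cauchy k)) => //.
have := enorm_gradf_le (fl k) (ltW D_gt0); have := grad_ge kK; lra.
Qed.

Let kH_gt0 : 0 < kH. Proof. exact: lt_le_trans ltr01 kH_ge1. Qed.

Let M_kmg_gt0 : 0 < M + kmg.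
Proof. by rewrite addr_gt0 // !lt_max kH_gt0 !orbT. Qed.

Let P_gt0 : 0 < 1 + kmg / muc.
Proof. by rewrite addr_gt0 ?divr_gt0. Qed.

Lemma Delta_min_gt0 : 0 < Dmin.
Proof. by rewrite /Delta_min !lt_min Delta0_gt0 !divr_gt0 ?mulr_gt0. Qed.

Lemma Delta_min_le_Delta k : (k <= K)%N -> Dmin <= Delta k.
Proof.
elim: k => [_|k IH kK]; first by rewrite /Delta_min ge_min lexx.
have {IH}Dmin_le := IH (ltnW kK); have D_gt0 := Delta_gt0 k.
have [small|large] := lerP (Delta k * (M + kmg)) eps.
  have [rhoS mucD] := very_successful_of_small_Delta kK small.
  rewrite (tr_update_very_successful (upd k) rhoS mucD) (le_trans Dmin_le) //.
  by rewrite ler_peMl // ltW.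
have /andP[Delta_ge _] := radius_bounds (ltW D_gt0).
apply: le_trans Delta_ge; apply: (@le_trans _ _ (gdec * eps / (M + kmg))).
  by rewrite /Delta_min !ge_min lexx !orbT.
by rewrite -mulrA ler_pM2l // ler_pdivrMr // ltW.
Qed.

Lemma decrease_of_successful_iteration k : (k < K)%N ->
  etaU <= rho k -> muc * Delta k <= enorm (g k) ->
  decrease <= f (x k) - f (x k.+1).
Proof.
move=> kK rhoU mucD; have [-> _] := tr_update_successful (upd k) rhoU mucD.
apply: (decrease_of_successful_step (fl k) (ltW (Delta_gt0 k)) ks_gt0 (opnorm_H_le k)
  (cauchy k) (ltW etaU_gt0) muc_gt0 (ltW kmg_gt0) Delta_min_gt0
  (Delta_min_le_Delta (ltnW kK)) _ (grad_ge kK) rhoU mucD).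
by rewrite -ler_pdivlMr ?mulr_gt0 // /Delta_min !ge_min lexx !orbT.
Qed.

Lemma iterations_count k : (k <= K)%N -> exists S U : nat, [/\ (S + U)%N = k,
  Delta k <= Delta 0%N * ginc ^+ S * gdec ^+ U &
  S%:R * decrease <= f (x 0%N) - f (x k)].
Proof.
elim: k => [_|k IH kK]; first by exists 0%N, 0%N; rewrite !expr0 !mulr1 mul0r subrr.
have [S [U [SU DeltaSU fSU]]] := IH (ltnW kK).
have /andP[_ Delta_le] := radius_bounds (ltW (Delta_gt0 k)).
have [[rhoU mucD]|failure] := pselect (etaU <= rho k /\ muc * Delta k <= enorm (g k)).
  exists S.+1, U; split; first by rewrite addSn SU.
    apply: le_trans Delta_le _.
    by rewrite exprS mulrCA -mulrA ler_pM2l ?(lt_trans ltr01).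
  have := decrease_of_successful_iteration kK rhoU mucD; rewrite -natr1 mulrDl mul1r.
  lra.
have [-> ->] := tr_update_unsuccessful (upd k) failure.
exists S, U.+1; split=> //; first by rewrite addnS SU.
by rewrite exprS mulrCA ler_pM2l.
Qed.

Lemma iterations_split : exists S U : nat, [/\ (S + U)%N = K,
  Dmin <= Delta 0%N * ginc ^+ S * gdec ^+ U &
  S%:R * decrease <= f (x 0%N) - f (x K)].
Proof.
have [S [U [SU DeltaK decrease_le]]] := iterations_count (leqnn K).
by exists S, U; split=> //; apply: le_trans (Delta_min_le_Delta (leqnn K)) DeltaK.
Qed.

End Iterates.

Lemma iteration_count_le_log (R : realType) (D0 Dm gdec ginc B : R) (S U : nat) :
  0 < gdec < 1 -> 1 <= ginc -> 0 < D0 -> 0 < Dm ->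
  Dm <= D0 * ginc ^+ S * gdec ^+ U -> S%:R <= B ->
  (S + U)%:R <= ln (D0 / Dm) / ln gdec^-1 + (1 + ln ginc / ln gdec^-1) * B.
Proof.
move=> /andP[gdec_gt0 gdec_lt1] ginc_ge1 D0_gt0 Dm_gt0 Dm_le S_le.
have ginc_gt0 : 0 < ginc := lt_le_trans ltr01 ginc_ge1.
have ln_Dm_le : ln Dm <= ln D0 + S%:R * ln ginc + U%:R * ln gdec.
  move: Dm_le; rewrite -ler_ln ?posrE ?mulr_gt0 ?exprn_gt0 //.
  by rewrite !lnM ?posrE ?mulr_gt0 ?exprn_gt0 // !lnXn // !mulr_natl.
have L_gt0 : 0 < - ln gdec by rewrite oppr_gt0 ln_lt0 // gdec_gt0.
have ln_ginc_ge0 : 0 <= ln ginc := ln_ge0 ginc_ge1.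
rewrite lnM ?posrE ?invr_gt0 // !lnV ?posrE // natrD.
set L := - ln gdec in L_gt0 *; set lg := ln ginc in ln_ginc_ge0 ln_Dm_le *.
set a := ln D0 + - ln Dm.
have U_le : U%:R <= (a + lg * S%:R) / L by rewrite ler_pdivlMr // /a /L; lra.
have -> : a / L + (1 + lg / L) * B
    = S%:R + (a + lg * S%:R) / L + (1 + lg / L) * (B - S%:R).
  by field; rewrite lt0r_neq0.
have : 0 <= (1 + lg / L) * (B - S%:R).
  by rewrite mulr_ge0 ?subr_ge0 // addr_ge0 ?ler01 ?divr_ge0 // ltW.
lra.
Qed.

Unset Implicit Arguments.

Theorem theorem4p7 (R : realType) (n : nat)
  (f : 'cV[R]_n -> R) (gradf : 'cV[R]_n -> 'cV[R]_n) (flow Lg : R)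
  (gdec ginc etaU etaS muc kmf kmg kH ks eps : R)
  (x : nat -> 'cV[R]_n) (Delta : nat -> R)
  (c : nat -> R) (g : nat -> 'cV[R]_n) (H : nat -> 'M[R]_n) (s : nat -> 'cV[R]_n)
  (K : nat) :
  (* f bounded below, C^1 with Lipschitz gradient *)
  (forall y, flow <= f y) ->
  (forall y, is_gradient f y (gradf y)) ->
  (forall y z, enorm (gradf y - gradf z) <= Lg * enorm (y - z)) ->
  (* algorithm parameters *)
  0 < gdec < 1 -> 1 < ginc ->
  0 < etaU -> etaU <= etaS -> etaS < 1 -> 0 < muc ->
  0 < Delta 0%N ->
  (* model assumptions (i) *)
  0 < kmf -> 0 < kmg -> 1 <= kH ->
  (forall k, (H k)^T = H k) ->
  (forall k, fully_linear f gradf kmf kmg (c k) (g k) (H k) (x k) (Delta k)) ->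
  (forall k, opnorm (H k) <= kH - 1) ->
  (* step assumptions (ii) *)
  0 < ks < 2^-1 ->
  (forall k, enorm (s k) <= Delta k) ->
  (forall k, qmodel (c k) (g k) (H k) (x k) (x k)
               - qmodel (c k) (g k) (H k) (x k) (x k + s k)
             >= ks * enorm (g k) *
                Num.min (Delta k) (enorm (g k) / (opnorm (H k) + 1))) ->
  (* iteration *)
  (forall k, tr_update f gdec ginc etaU etaS muc (c k) (g k) (H k) (x k) (s k)
               (Delta k) (x k.+1) (Delta k.+1)) ->
  0 < eps ->
  (forall k, (k < K)%N -> eps <= enorm (gradf (x k))) ->
  let Dmin := Delta_min (Delta 0%N) gdec kmf kmg kH ks etaS muc eps in
  K%:R <= ln (Delta 0%N / Dmin) / ln (gdec^-1)
          + (1 + ln ginc / ln (gdec^-1)) *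
            ((1 + kmg / muc) * (f (x 0%N) - flow) / (etaU * ks * eps * Dmin)).
Proof.
move=> f_ge _ _ /andP[gdec_gt0 gdec_lt1] ginc_gt1 etaU_gt0 _ etaS_lt1 muc_gt0
  Delta0_gt0 kmf_gt0 kmg_gt0 kH_ge1 _ fl H_le /andP[ks_gt0 _] s_le cauchy upd eps_gt0
  grad_ge.
cbv zeta; set Dmin := Delta_min _ _ _ _ _ _ _ _ _.
have Dmin_gt0 : 0 < Dmin := Delta_min_gt0 etaS kmf ks gdec_gt0 muc_gt0 kmg_gt0 kH_ge1
  eps_gt0 Delta0_gt0.
have [S [U [<- Dmin_le decrease_le]]] := iterations_split gdec_gt0 gdec_lt1 ginc_gt1
  etaU_gt0 etaS_lt1 muc_gt0 kmf_gt0 kmg_gt0 kH_ge1 ks_gt0 eps_gt0 Delta0_gt0 fl H_le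
  s_le cauchy upd grad_ge.
apply: iteration_count_le_log Dmin_le _; rewrite ?gdec_gt0 ?(ltW ginc_gt1) //.
have P_gt0 : 0 < 1 + kmg / muc by rewrite addr_gt0 ?divr_gt0.
rewrite ler_pdivlMr ?mulr_gt0 //; move: decrease_le; rewrite mulrA ler_pdivrMr //.
by move/le_trans; apply; rewrite mulrC ler_pM2l // lerD2l lerN2.
Qed.
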